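(* Let $r,u>0$, $0<\alpha\le 2$, $\eta>0$ and $s\in\mathbb{C}\setminus\{0\}$. Then there exists $M>0$ such that \[ F^{\alpha}_{s,r}\circ F^{\alpha}_{us,u}=F^{\alpha}_{us,ur}\quad\text{on }\Gamma_{\eta,M} \] (all three functions, and the composition, being well defined there).
   Context: Branch conventions: for $w\in\mathbb{C}\setminus[0,\infty)$ and $p\in\{\alpha,1/\alpha\}$, $w^{p}:=e^{p\log_{(1)}w}$, where $\log_{(1)}$ is the branch of the logarithm with imaginary part in $(0,2\pi)$; for $w\in\mathbb{C}\setminus(-\infty,0]$, $w^{1/r}:=e^{\frac1r\operatorname{Log}w}$ with the principal logarithm (imaginary part in $(-\pi,\pi)$); $r^{1/\alpha}>0$ denotes the positive root. For $\eta,M>0$ let $\Gamma_{\eta,M}=\{z\in\mathbb{C}:\operatorname{Im}z>M,\ \operatorname{Im}z>\eta|\operatorname{Re}z|\}$. For $0<\alpha\le2$, $r>0$, $s\in\mathbb{C}\setminus\{0\}$ define \[ G^{\alpha}_{s,r}(z)=-r^{1/\alpha}\left(\frac{1-\big(1-s(-\tfrac1z)^{\alpha}\big)^{1/r}}{s}\right)^{1/\alpha}. \] For every $\eta>0$ there is $M>0$ such that on $\Gamma_{\eta,M}$ every power in this formula is applied to a point in the domain of its branch, so $G^\alpha_{s,r}$ is analytic and nonvanishing there; set $F^{\alpha}_{s,r}:=1/G^{\alpha}_{s,r}$ on such a domain. *)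

From Stdlib Require Import Reals Lra.
Open Scope R_scope.

Definition CC : Type := (R * R)%type.
Definition Re (z : CC) : R := fst z.
Definition Im (z : CC) : R := snd z.
Definition RtoC (x : R) : CC := (x, 0).
Definition C0 : CC := (0, 0).
Definition C1 : CC := (1, 0).
Definition Cadd (z w : CC) : CC := (Re z + Re w, Im z + Im w).
Definition Copp (z : CC) : CC := (- Re z, - Im z).
Definition Csub (z w : CC) : CC := Cadd z (Copp w).
Definition Cmul (z w : CC) : CC :=
  (Re z * Re w - Im z * Im w, Re z * Im w + Im z * Re w).
Definition Cnorm2 (z : CC) : R := Re z * Re z + Im z * Im z.
Definition Cinv (z : CC) : CC := (Re z / Cnorm2 z, - Im z / Cnorm2 z).
Definition Cdiv (z w : CC) : CC := Cmul z (Cinv w).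
Definition Cabs (z : CC) : R := sqrt (Cnorm2 z).
Definition Cexp (z : CC) : CC := (exp (Re z) * cos (Im z), exp (Re z) * sin (Im z)).

(** Principal argument, with values in (-PI, PI] (and 0 at 0). *)
Definition Arg (z : CC) : R :=
  let x := Re z in let y := Im z in
  if Rlt_dec 0 x then atan (y / x)
  else if Rlt_dec x 0 then
         (if Rle_dec 0 y then atan (y / x) + PI else atan (y / x) - PI)
  else if Rlt_dec 0 y then PI / 2
  else if Rlt_dec y 0 then - (PI / 2)
  else 0.

(** Principal logarithm Log (imaginary part in (-PI, PI) on CC \ (-oo,0]). *)
Definition Clog_princ (w : CC) : CC := (ln (Cabs w), Arg w).

(** The branch log_(1): imaginary part in (0, 2 PI) on CC \ [0, +oo). *)
Definition arg1 (w : CC) : R := if Rlt_dec 0 (Arg w) then Arg w else Arg w + 2 * PI.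
Definition Clog1 (w : CC) : CC := (ln (Cabs w), arg1 w).

(* w^p := exp (p log_(1) w), used for p in {alpha, 1/alpha} on CC \ [0,oo) *)
Definition cpow1 (w : CC) (p : R) : CC := Cexp (Cmul (RtoC p) (Clog1 w)).
(* w^p := exp (p Log w), used for p = 1/r on CC \ (-oo,0] *)
Definition cpowP (w : CC) (p : R) : CC := Cexp (Cmul (RtoC p) (Clog_princ w)).

Definition not_in_nonneg_axis (w : CC) : Prop := ~ (Im w = 0 /\ 0 <= Re w).
Definition not_in_nonpos_axis (w : CC) : Prop := ~ (Im w = 0 /\ Re w <= 0).

Definition G_w1 (z : CC) : CC := Copp (Cinv z).
Definition G_w2 (alpha : R) (s z : CC) : CC :=
  Csub C1 (Cmul s (cpow1 (G_w1 z) alpha)).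
Definition G_w3 (alpha r : R) (s z : CC) : CC :=
  Cdiv (Csub C1 (cpowP (G_w2 alpha s z) (1 / r))) s.

Definition G (alpha : R) (s : CC) (r : R) (z : CC) : CC :=
  Copp (Cmul (RtoC (Rpower r (1 / alpha))) (cpow1 (G_w3 alpha r s z) (1 / alpha))).

Definition F (alpha : R) (s : CC) (r : R) (z : CC) : CC := Cinv (G alpha s r z).

(** F^alpha_{s,r} is well defined at z: every power is applied to a point of
    the domain of its branch, and G is nonzero. *)
Definition F_welldef (alpha : R) (s : CC) (r : R) (z : CC) : Prop :=
  z <> C0 /\
  not_in_nonneg_axis (G_w1 z) /\
  not_in_nonpos_axis (G_w2 alpha s z) /\
  not_in_nonneg_axis (G_w3 alpha r s z) /\
  G alpha s r z <> C0.

Definition Gamma (eta M : R) (z : CC) : Prop := M < Im z /\ eta * Rabs (Re z) < Im z.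

From Pilot Require Import Defs.
From Stdlib Require Import Reals Lra Psatz.
Open Scope R_scope.

(* Write t = us, w = -1/z and Q = 1 - t w^alpha.  Unwinding the definitions,
   -1/F_{t,u}(z) = (u X1)^(1/alpha) with X1 = (1 - Q^(1/u))/t, so applying F_{s,r} to it
   first recovers  1 - s (-1/F_{t,u}(z))^alpha = Q^(1/u),  then (Q^(1/u))^(1/r) = Q^(1/(ur)),
   which is exactly the expression defining F_{t,ur}(z).  The only issue is that all these
   identities between powers hold for the chosen branches only when the arguments stay in
   the right strips.  This is guaranteed on Gamma_{eta,M}: there w lies in a sector
   arg w in (theta0, PI - theta0) and is small, so Q is close to 1, and a first-order
   expansion shows that (1 - Q^p)/t = p w^alpha (1 + small) has argument in (0, alpha PI). *)

Lemma CC_eq (a b : CC) : Re a = Re b -> Im a = Im b -> a = b.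
Proof. destruct a, b; unfold Re, Im; simpl; intros; subst; reflexivity. Qed.

Lemma Cnorm2_ge0 (z : CC) : 0 <= Cnorm2 z.
Proof. unfold Cnorm2; nra. Qed.

Lemma Cnorm2_pos (z : CC) : z <> C0 -> 0 < Cnorm2 z.
Proof.
  destruct z as [x y]; unfold Cnorm2, Re, Im, C0; simpl; intros H.
  destruct (Req_dec x 0), (Req_dec y 0); subst; try (exfalso; apply H; reflexivity); nra.
Qed.

Lemma Cabs_pos (z : CC) : z <> C0 -> 0 < Cabs z.
Proof. intros H; apply sqrt_lt_R0, Cnorm2_pos, H. Qed.

Lemma Cabs_ne0 (z : CC) : 0 < Cabs z -> z <> C0.
Proof.
  intros H E; rewrite E in H; unfold Cabs, Cnorm2, C0, Re, Im in H; simpl in H.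
  replace (0 * 0 + 0 * 0) with 0 in H by ring; rewrite sqrt_0 in H; lra.
Qed.

Lemma Re_le_Cabs (z : CC) : Rabs (Re z) <= Cabs z.
Proof. rewrite <- sqrt_Rsqr_abs; apply sqrt_le_1_alt; unfold Rsqr, Cnorm2; nra. Qed.

Lemma Im_le_Cabs (z : CC) : Rabs (Im z) <= Cabs z.
Proof. rewrite <- sqrt_Rsqr_abs; apply sqrt_le_1_alt; unfold Rsqr, Cnorm2; nra. Qed.

Lemma Cabs_le_sum (z : CC) : Cabs z <= Rabs (Re z) + Rabs (Im z).
Proof.
  pose proof (Rabs_pos (Re z)); pose proof (Rabs_pos (Im z)).
  unfold Cabs; rewrite <- (sqrt_Rsqr (Rabs (Re z) + Rabs (Im z))) by lra.
  apply sqrt_le_1_alt; unfold Rsqr, Cnorm2.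
  assert (Rabs (Re z) * Rabs (Re z) = Re z * Re z)
    by (rewrite <- Rabs_mult; apply Rabs_pos_eq; nra).
  assert (Rabs (Im z) * Rabs (Im z) = Im z * Im z)
    by (rewrite <- Rabs_mult; apply Rabs_pos_eq; nra).
  nra.
Qed.

(* Triangle inequality, via Cauchy-Schwarz for the real inner product. *)
Lemma Cabs_triang (a b : CC) : Cabs (Cadd a b) <= Cabs a + Cabs b.
Proof.
  destruct a as [a1 a2], b as [b1 b2].
  unfold Cabs, Cnorm2, Cadd, Re, Im; simpl.
  pose proof (sqrt_pos (a1 * a1 + a2 * a2)) as HA.
  pose proof (sqrt_pos (b1 * b1 + b2 * b2)) as HB.
  pose proof (sqrt_sqrt (a1 * a1 + a2 * a2) ltac:(nra)) as HA2.
  pose proof (sqrt_sqrt (b1 * b1 + b2 * b2) ltac:(nra)) as HB2.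
  revert HA HB HA2 HB2.
  generalize (sqrt (a1 * a1 + a2 * a2)) (sqrt (b1 * b1 + b2 * b2)); intros A B HA HB HA2 HB2.
  rewrite <- (sqrt_Rsqr (A + B)) by lra; apply sqrt_le_1_alt; unfold Rsqr.
  assert (CS : (a1 * b1 + a2 * b2) * (a1 * b1 + a2 * b2) <= (A * B) * (A * B)).
  { replace ((A * B) * (A * B)) with ((A * A) * (B * B)) by ring.
    rewrite HA2, HB2; pose proof (Rle_0_sqr (a1 * b2 - a2 * b1)); unfold Rsqr in *; nra. }
  assert (a1 * b1 + a2 * b2 <= A * B)
    by (apply Rsqr_incr_0_var; unfold Rsqr; nra).
  nra.
Qed.

Lemma Cabs_mul (a b : CC) : Cabs (Cmul a b) = Cabs a * Cabs b.
Proof.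
  unfold Cabs; rewrite <- sqrt_mult by apply Cnorm2_ge0; f_equal.
  unfold Cnorm2, Cmul, Re, Im; simpl; ring.
Qed.

Lemma Cabs_inv (b : CC) : b <> C0 -> Cabs (Cinv b) = / Cabs b.
Proof.
  intros H; pose proof (Cnorm2_pos b H); unfold Cabs; rewrite <- sqrt_inv; f_equal.
  destruct b as [x y]; unfold Cnorm2, Cinv, Re, Im in *; simpl in *.
  unfold Cnorm2, Re, Im; simpl; field; lra.
Qed.

Lemma Cabs_div (a b : CC) : b <> C0 -> Cabs (Cdiv a b) = Cabs a / Cabs b.
Proof. intros H; unfold Cdiv; rewrite Cabs_mul, Cabs_inv by exact H; reflexivity. Qed.

Lemma Cabs_Copp (z : CC) : Cabs (Copp z) = Cabs z.
Proof. unfold Cabs, Cnorm2, Copp, Re, Im; simpl; f_equal; ring. Qed.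

Lemma Cabs_sub (a b : CC) : Cabs (Csub a b) <= Cabs a + Cabs b.
Proof. unfold Csub; rewrite <- (Cabs_Copp b); apply Cabs_triang. Qed.

Lemma Cabs_RtoC (x : R) : 0 <= x -> Cabs (RtoC x) = x.
Proof.
  intros H; unfold Cabs, Cnorm2, RtoC, Re, Im; simpl.
  replace (x * x + 0 * 0) with (x * x) by ring; apply sqrt_square, H.
Qed.

Lemma Cscal_ne0 (u : R) (s : CC) : 0 < u -> s <> C0 -> Cmul (RtoC u) s <> C0.
Proof.
  intros Hu Hs; apply Cabs_ne0; rewrite Cabs_mul, Cabs_RtoC by lra.
  pose proof (Cabs_pos s Hs); nra.
Qed.

Lemma Cmul_RtoC (a : R) (z : CC) : Cmul (RtoC a) z = (a * Re z, a * Im z).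
Proof. apply CC_eq; unfold Cmul, RtoC, Re, Im; simpl; ring. Qed.

Lemma Cmul_assoc (a b c : CC) : Cmul a (Cmul b c) = Cmul (Cmul a b) c.
Proof. apply CC_eq; unfold Cmul, Re, Im; simpl; ring. Qed.

Lemma Cnorm2_scal (a : R) (z : CC) : Cnorm2 (a * Re z, a * Im z) = a * a * Cnorm2 z.
Proof. unfold Cnorm2, Re, Im; simpl; ring. Qed.

Lemma Cinv_Cinv (z : CC) : z <> C0 -> Cinv (Cinv z) = z.
Proof.
  intros H; pose proof (Cnorm2_pos z H).
  destruct z as [x y]; unfold Cinv, Cnorm2, Re, Im in *; simpl in *.
  assert (E : x / (x * x + y * y) * (x / (x * x + y * y)) +
              - y / (x * x + y * y) * (- y / (x * x + y * y)) = / (x * x + y * y))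
    by (field; lra).
  rewrite E; apply CC_eq; unfold Re, Im; simpl; field; lra.
Qed.

Lemma Cinv_ne0 (z : CC) : z <> C0 -> Cinv z <> C0.
Proof.
  intros H; apply Cabs_ne0; rewrite Cabs_inv by exact H.
  apply Rinv_0_lt_compat, Cabs_pos, H.
Qed.

Lemma Copp_Copp (z : CC) : Copp (Copp z) = z.
Proof. apply CC_eq; unfold Copp, Re, Im; simpl; ring. Qed.

Lemma Cabs_Cexp (v : CC) : Cabs (Cexp v) = exp (Re v).
Proof.
  unfold Cabs, Cnorm2, Cexp, Re, Im; simpl.
  replace (exp (fst v) * cos (snd v) * (exp (fst v) * cos (snd v)) +
           exp (fst v) * sin (snd v) * (exp (fst v) * sin (snd v)))
    with (exp (fst v) * exp (fst v))
    by (pose proof (sin2_cos2 (snd v)); unfold Rsqr in *; nra).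
  apply sqrt_square; left; apply exp_pos.
Qed.

Lemma Copp_Cexp_ne0 (v : CC) : Copp (Cexp v) <> C0.
Proof. apply Cabs_ne0; rewrite Cabs_Copp, Cabs_Cexp; apply exp_pos. Qed.

Lemma Cexp_add (v w : CC) : Cmul (Cexp v) (Cexp w) = Cexp (Re v + Re w, Im v + Im w).
Proof.
  apply CC_eq; unfold Cmul, Cexp, Re, Im; simpl;
    rewrite exp_plus; [rewrite cos_plus | rewrite sin_plus]; ring.
Qed.

Lemma scal_Cexp (c : R) (v : CC) : 0 < c -> Cmul (RtoC c) (Cexp v) = Cexp (ln c + Re v, Im v).
Proof.
  intros Hc; rewrite Cmul_RtoC; apply CC_eq; unfold Cexp, Re, Im; simpl;
    rewrite exp_plus, exp_ln by exact Hc; ring.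
Qed.

Lemma Cnorm2_neq0 (z : CC) : z <> C0 -> fst z * fst z + snd z * snd z <> 0.
Proof. intros H; pose proof (Cnorm2_pos z H); unfold Cnorm2, Re, Im in *; lra. Qed.

Lemma Cmul_div (X s : CC) : s <> C0 -> Cmul s (Cdiv X s) = X.
Proof.
  intros Hs; pose proof (Cnorm2_neq0 s Hs).
  destruct s as [s1 s2], X as [x1 x2]; simpl in *.
  apply CC_eq; unfold Cmul, Cdiv, Cinv, Cnorm2, Re, Im; simpl; field; auto.
Qed.

Lemma Cdiv_rescale (A k t : CC) : k <> C0 -> t <> C0 ->
  Cdiv A t = Cmul k (Cdiv A (Cmul k t)).
Proof.
  intros Hk Ht; pose proof (Cnorm2_neq0 k Hk); pose proof (Cnorm2_neq0 t Ht).
  destruct k as [k1 k2], t as [t1 t2], A as [a1 a2]; simpl in *.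
  assert ((k1 * t1 - k2 * t2) * (k1 * t1 - k2 * t2) + (k1 * t2 + k2 * t1) * (k1 * t2 + k2 * t1)
          <> 0).
  { replace ((k1 * t1 - k2 * t2) * (k1 * t1 - k2 * t2) + (k1 * t2 + k2 * t1) * (k1 * t2 + k2 * t1))
      with ((k1 * k1 + k2 * k2) * (t1 * t1 + t2 * t2)) by ring.
    apply Rmult_integral_contrapositive_currified; auto. }
  apply CC_eq; unfold Cmul, Cdiv, Cinv, Cnorm2, Re, Im; simpl; field; auto.
Qed.

Lemma Csub_div_one (A B : CC) : B <> C0 -> Csub (Cdiv A B) Defs.C1 = Cdiv (Csub A B) B.
Proof.
  intros HB; pose proof (Cnorm2_neq0 B HB).
  destruct A as [a1 a2], B as [b1 b2]; simpl in *.
  apply CC_eq; unfold Csub, Cadd, Copp, Defs.C1, Cmul, Cdiv, Cinv, Cnorm2, Re, Im; simpl;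
    field; auto.
Qed.

Lemma sqrt_1_plus_sq (x y : R) : x <> 0 -> sqrt (1 + (y / x)²) = sqrt (x * x + y * y) / Rabs x.
Proof.
  intros Hx; assert (0 < Rabs x) by (apply Rabs_pos_lt; exact Hx).
  rewrite <- (sqrt_Rsqr (Rabs x)) by lra.
  rewrite <- sqrt_div; [| unfold Rsqr; nra | unfold Rsqr; nra].
  f_equal; unfold Rsqr; rewrite <- Rabs_mult, Rabs_pos_eq by nra; field; exact Hx.
Qed.

Lemma Arg_polar (z : CC) : z <> C0 ->
  Cabs z * cos (Arg z) = Re z /\ Cabs z * sin (Arg z) = Im z.
Proof.
  intros Hz; pose proof (Cabs_pos z Hz) as HS.
  destruct z as [x y]; unfold Cabs, Cnorm2, Arg, Re, Im in *; simpl in *.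
  destruct (Rlt_dec 0 x) as [Hx|Hx].
  - rewrite cos_atan, sin_atan, sqrt_1_plus_sq by lra; rewrite Rabs_pos_eq by lra.
    split; field; lra.
  - destruct (Rlt_dec x 0) as [Hx'|Hx'].
    + assert (Cp : cos (atan (y / x) + PI) = - cos (atan (y / x))) by apply neg_cos.
      assert (Sp : sin (atan (y / x) + PI) = - sin (atan (y / x))) by apply neg_sin.
      assert (Cm : cos (atan (y / x) - PI) = - cos (atan (y / x)))
        by (rewrite cos_minus, cos_PI, sin_PI; ring).
      assert (Sm : sin (atan (y / x) - PI) = - sin (atan (y / x)))
        by (rewrite sin_minus, cos_PI, sin_PI; ring).
      destruct (Rle_dec 0 y); [rewrite Cp, Sp | rewrite Cm, Sm];
        rewrite cos_atan, sin_atan, sqrt_1_plus_sq by lra;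
        rewrite Rabs_left by lra; split; field; lra.
    + assert (x = 0) by lra; subst x.
      assert (E : sqrt (0 * 0 + y * y) = Rabs y)
        by (rewrite <- sqrt_Rsqr_abs; f_equal; unfold Rsqr; ring).
      rewrite E in *.
      destruct (Rlt_dec 0 y).
      * rewrite cos_PI2, sin_PI2, Rabs_pos_eq by lra; split; ring.
      * destruct (Rlt_dec y 0).
        -- rewrite cos_neg, sin_neg, cos_PI2, sin_PI2, Rabs_left by lra; split; ring.
        -- exfalso; apply Hz; unfold C0; f_equal; lra.
Qed.

Lemma atan_nonpos (q : R) : q <= 0 -> atan q <= 0.
Proof.
  intros H; destruct (Req_dec q 0) as [->|]; [rewrite atan_0; lra |].
  left; rewrite <- atan_0; apply atan_increasing; lra.
Qed.

Lemma atan_pos (q : R) : 0 < q -> 0 < atan q.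
Proof. intros H; rewrite <- atan_0; apply atan_increasing; lra. Qed.

Lemma Arg_range (z : CC) : - PI < Arg z <= PI.
Proof.
  pose proof PI_RGT_0.
  destruct z as [x y]; unfold Arg, Re, Im; simpl.
  destruct (Rlt_dec 0 x); [pose proof (atan_bound (y / x)); lra |].
  destruct (Rlt_dec x 0).
  - pose proof (atan_bound (y / x)).
    assert (/ x < 0) by (apply Rinv_lt_0_compat; lra).
    destruct (Rle_dec 0 y).
    + pose proof (atan_nonpos (y / x) ltac:(unfold Rdiv; nra)); lra.
    + pose proof (atan_pos (y / x) ltac:(unfold Rdiv; nra)); lra.
  - destruct (Rlt_dec 0 y); [lra |]; destruct (Rlt_dec y 0); lra.
Qed.

Lemma Arg_right (z : CC) : 0 < Re z -> - (PI / 2) < Arg z < PI / 2.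
Proof.
  intros H; destruct z as [x y]; unfold Arg, Re, Im in *; simpl in *.
  destruct (Rlt_dec 0 x); [| lra]; pose proof (atan_bound (y / x)); lra.
Qed.

Lemma angle_uniq (a b : R) : - PI < a <= PI -> - PI < b <= PI ->
  cos a = cos b -> sin a = sin b -> a = b.
Proof.
  intros Ha Hb Hc Hs.
  assert (H : cos (a - b) = 1).
  { rewrite cos_minus, Hc, Hs; pose proof (sin2_cos2 b); unfold Rsqr in *; lra. }
  replace (a - b) with (2 * ((a - b) / 2)) in H by field; rewrite cos_2a_sin in H.
  assert (H0 : sin ((a - b) / 2) = 0) by nra.
  destruct (Rtotal_order ((a - b) / 2) 0) as [h|[h|h]].
  - pose proof (sin_lt_0_var ((a - b) / 2) ltac:(lra) h); lra.
  - lra.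
  - pose proof (sin_gt_0 ((a - b) / 2) h ltac:(lra)); lra.
Qed.

Lemma Cabs_polar (rho th : R) : 0 < rho -> Cabs (rho * cos th, rho * sin th) = rho.
Proof.
  intros H; unfold Cabs, Cnorm2, Re, Im; simpl.
  replace (rho * cos th * (rho * cos th) + rho * sin th * (rho * sin th)) with (rho * rho)
    by (pose proof (sin2_cos2 th); unfold Rsqr in *; nra).
  apply sqrt_square; lra.
Qed.

Lemma Arg_uniq (rho th : R) : 0 < rho -> - PI < th <= PI ->
  Arg (rho * cos th, rho * sin th) = th.
Proof.
  intros H Hth.
  assert (Hne : (rho * cos th, rho * sin th) <> C0)
    by (apply Cabs_ne0; rewrite Cabs_polar; lra).
  destruct (Arg_polar _ Hne) as [H1 H2].
  rewrite Cabs_polar in H1, H2 by exact H; unfold Re, Im in *; simpl in *.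
  apply angle_uniq; auto using Arg_range;
    apply (Rmult_eq_reg_l rho); lra.
Qed.

Lemma arg1_uniq (rho th : R) : 0 < rho -> 0 < th < 2 * PI ->
  arg1 (rho * cos th, rho * sin th) = th.
Proof.
  intros H Hth; unfold arg1.
  destruct (Rle_dec th PI).
  - rewrite Arg_uniq by (auto; lra); destruct (Rlt_dec 0 th); lra.
  - assert (E : (rho * cos th, rho * sin th) =
                (rho * cos (th - 2 * PI), rho * sin (th - 2 * PI)))
      by (rewrite cos_minus, sin_minus, cos_2PI, sin_2PI; f_equal; ring).
    rewrite E, Arg_uniq by (auto; lra); destruct (Rlt_dec 0 (th - 2 * PI)); lra.
Qed.

Lemma Clog_princ_Cexp (v : CC) : - PI < Im v <= PI -> Clog_princ (Cexp v) = v.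
Proof.
  intros H; unfold Clog_princ; rewrite Cabs_Cexp, ln_exp.
  unfold Cexp; rewrite Arg_uniq by (auto; apply exp_pos); destruct v; reflexivity.
Qed.

Lemma Clog1_Cexp (v : CC) : 0 < Im v < 2 * PI -> Clog1 (Cexp v) = v.
Proof.
  intros H; unfold Clog1; rewrite Cabs_Cexp, ln_exp.
  unfold Cexp; rewrite arg1_uniq by (auto; apply exp_pos); destruct v; reflexivity.
Qed.

Lemma Cexp_Clog_princ (z : CC) : z <> C0 -> Cexp (Clog_princ z) = z.
Proof.
  intros H; destruct (Arg_polar z H) as [H1 H2]; pose proof (Cabs_pos z H).
  unfold Cexp, Clog_princ, Re, Im in *; simpl; rewrite exp_ln by lra.
  apply CC_eq; unfold Re, Im; simpl; lra.
Qed.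

Lemma cpowP_Cexp (v : CC) (p : R) : - PI < Im v <= PI ->
  cpowP (Cexp v) p = Cexp (p * Re v, p * Im v).
Proof. intros H; unfold cpowP; rewrite Clog_princ_Cexp, Cmul_RtoC by exact H; reflexivity. Qed.

Lemma cpow1_Cexp (v : CC) (p : R) : 0 < Im v < 2 * PI ->
  cpow1 (Cexp v) p = Cexp (p * Re v, p * Im v).
Proof. intros H; unfold cpow1; rewrite Clog1_Cexp, Cmul_RtoC by exact H; reflexivity. Qed.

Lemma cpowP_cpowP (Q : CC) (p q : R) : - PI < p * Arg Q <= PI ->
  cpowP (cpowP Q p) q = cpowP Q (q * p).
Proof.
  intros H; unfold cpowP at 2; rewrite Cmul_RtoC, cpowP_Cexp by exact H.
  unfold cpowP; rewrite Cmul_RtoC; unfold Clog_princ, Re, Im; simpl.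
  f_equal; f_equal; ring.
Qed.

Lemma Cexp_not_nonneg (v : CC) : 0 < Im v < 2 * PI -> not_in_nonneg_axis (Cexp v).
Proof.
  intros H [H1 H2]; unfold Cexp, Re, Im in *; simpl in *.
  pose proof (exp_pos (fst v)).
  assert (sin (snd v) = 0) by (apply (Rmult_eq_reg_l (exp (fst v))); lra).
  destruct (Rtotal_order (snd v) PI) as [h|[h|h]].
  - pose proof (sin_gt_0 (snd v)); lra.
  - rewrite h, cos_PI in H2; lra.
  - pose proof (sin_lt_0 (snd v)); lra.
Qed.

Lemma Cexp_not_nonpos (v : CC) : Rabs (Im v) <= 1 / 2 -> not_in_nonpos_axis (Cexp v).
Proof.
  intros H [H1 H2]; unfold Cexp, Re, Im in *; simpl in *.
  pose proof (exp_pos (fst v)); pose proof PI2_1.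
  assert (0 < cos (snd v)) by (revert H; split_Rabs; intros; apply cos_gt_0; lra).
  nra.
Qed.

Lemma sin_lower (a : R) : 0 <= a <= 1 -> a - a ^ 3 / 6 <= sin a.
Proof.
  intros H; pose proof PI2_1; destruct (SIN a) as [H1 _]; try lra.
  replace (sin_lb a) with (a - a ^ 3 / 6 + a ^ 5 / 120 - a ^ 7 / 5040) in H1
    by (unfold sin_lb, sin_approx, sin_term; simpl; field).
  assert (a ^ 7 <= a ^ 5).
  { replace (a ^ 7) with (a ^ 5 * (a * a)) by ring.
    assert (0 <= a ^ 5) by (apply pow_le; lra).
    rewrite <- (Rmult_1_r (a ^ 5)) at 2; apply Rmult_le_compat_l; nra. }
  assert (0 <= a ^ 7) by (apply pow_le; lra).
  lra.
Qed.

Lemma sin_le_id (a : R) : 0 <= a -> sin a <= a.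
Proof.
  intros H; destruct (Req_dec a 0) as [->|]; [rewrite sin_0; lra |].
  left; apply sin_lt_x; lra.
Qed.

Lemma abs_sin_le (x : R) : Rabs (sin x) <= Rabs x.
Proof.
  pose proof PI2_1.
  assert (Hpos : forall a, 0 <= a -> Rabs (sin a) <= a).
  { intros a Ha; destruct (Rle_dec a 1).
    - pose proof (sin_le_id a Ha); pose proof (sin_lower a).
      assert (0 <= a ^ 3 / 6 <= a) by (simpl; split; nra).
      apply Rabs_le; lra.
    - pose proof (SIN_bound a); apply Rabs_le; lra. }
  destruct (Rle_dec 0 x); [rewrite (Rabs_pos_eq x) by lra; auto |].
  pose proof (Hpos (- x) ltac:(lra)); rewrite sin_neg, Rabs_Ropp in H0.
  rewrite (Rabs_left x) by lra; lra.
Qed.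

Lemma small_angle (psi d : R) : - (PI / 2) < psi < PI / 2 -> 0 < d <= 1 ->
  Rabs (sin psi) <= d / 2 -> Rabs psi < d.
Proof.
  intros Hp Hd Hs; pose proof PI2_1.
  assert (Hsd : d / 2 < sin d).
  { pose proof (sin_lower d).
    assert (d * (d * d) <= d) by nra; simpl in *; lra. }
  apply Rabs_def1.
  - destruct (Rlt_dec psi d); auto; exfalso.
    assert (sin d <= sin psi).
    { destruct (Req_dec psi d) as [->|]; [lra |]; left; apply sin_increasing_1; lra. }
    revert Hs; split_Rabs; intros; lra.
  - destruct (Rlt_dec (- d) psi); auto; exfalso.
    assert (sin psi <= sin (- d)).
    { destruct (Req_dec psi (- d)) as [->|]; [lra |]; left; apply sin_increasing_1; lra. }
    rewrite sin_neg in H0; revert Hs; split_Rabs; intros; lra.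
Qed.

Lemma exp_bounds (x : R) : Rabs x <= 1 / 2 ->
  1 + x <= exp x /\ exp x <= 1 + x + 2 * (x * x).
Proof.
  intros H; assert (Hx : - 1 / 2 <= x <= 1 / 2) by (revert H; split_Rabs; intros; lra).
  split; [apply exp_ineq1_le |].
  pose proof (exp_ineq1_le (- x)); pose proof (exp_pos x).
  assert (exp x * exp (- x) = 1)
    by (rewrite <- exp_plus; replace (x + - x) with 0 by ring; apply exp_0).
  assert (exp x * (1 - x) <= 1) by nra.
  assert (1 <= (1 - x) * (1 + x + 2 * (x * x))) by nra.
  nra.
Qed.

Lemma cos_bound (y : R) : 0 <= 1 - cos y <= y * y / 2.
Proof.
  split; [pose proof (COS_bound y); lra |].
  replace y with (2 * (y / 2)) at 1 by field; rewrite cos_2a_sin.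
  pose proof (abs_sin_le (y / 2)).
  assert (Rabs (sin (y / 2)) * Rabs (sin (y / 2)) <= Rabs (y / 2) * Rabs (y / 2))
    by (apply Rmult_le_compat; auto using Rabs_pos).
  rewrite <- !Rabs_mult, !Rabs_pos_eq in H0 by nra.
  nra.
Qed.

Lemma sin_minus_id (y : R) : Rabs y <= 1 / 2 -> Rabs (sin y - y) <= y * y.
Proof.
  intros H.
  assert (Hpos : forall a, 0 <= a <= 1 / 2 -> Rabs (sin a - a) <= a * a).
  { intros a Ha; pose proof (sin_le_id a); pose proof (sin_lower a).
    assert (a ^ 3 / 6 <= a * a) by (simpl; nra); apply Rabs_le; lra. }
  destruct (Rle_dec 0 y); [apply Hpos; revert H; split_Rabs; lra |].
  pose proof (Hpos (- y) ltac:(revert H; split_Rabs; lra)).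
  rewrite sin_neg in H0; replace (- sin y - - y) with (- (sin y - y)) in H0 by ring.
  rewrite Rabs_Ropp in H0; lra.
Qed.

Lemma ln_bounds (x : R) : 0 < x -> 1 - / x <= ln x <= x - 1.
Proof.
  intros H; split.
  - pose proof (exp_ineq1_le (ln (/ x))).
    rewrite exp_ln, ln_Rinv in H0 by (try apply Rinv_0_lt_compat; lra); lra.
  - pose proof (exp_ineq1_le (ln x)); rewrite exp_ln in H0 by lra; lra.
Qed.

Lemma exp_cos_remainder (x y : R) : Rabs x <= 1 / 2 -> Rabs y <= 1 / 2 ->
  Rabs (exp x * cos y - 1 - x) <= 2 * (x * x + y * y).
Proof.
  intros Hx Hy; destruct (exp_bounds x Hx); pose proof (cos_bound y).
  assert (exp x <= 2) by (revert Hx; split_Rabs; intros; nra).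
  pose proof (exp_pos x).
  assert (0 <= exp x * (1 - cos y) <= y * y) by nra.
  replace (exp x * cos y - 1 - x) with ((exp x - 1 - x) - exp x * (1 - cos y)) by ring.
  apply Rabs_le; nra.
Qed.

Lemma exp_sin_remainder (x y : R) : Rabs x <= 1 / 2 -> Rabs y <= 1 / 2 ->
  Rabs (exp x * sin y - y) <= 2 * (x * x + y * y).
Proof.
  intros Hx Hy; destruct (exp_bounds x Hx).
  pose proof (sin_minus_id y Hy); pose proof (abs_sin_le y).
  pose proof (Rabs_pos x); pose proof (Rabs_pos y).
  assert (Rabs (exp x - 1) <= 2 * Rabs x) by (revert Hx; split_Rabs; intros; nra).
  assert (Rabs (exp x - 1) * Rabs (sin y) <= 2 * Rabs x * Rabs y)
    by (apply Rmult_le_compat; auto using Rabs_pos).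
  assert (Rabs x * Rabs x = x * x) by (rewrite <- Rabs_mult; apply Rabs_pos_eq; nra).
  assert (Rabs y * Rabs y = y * y) by (rewrite <- Rabs_mult; apply Rabs_pos_eq; nra).
  assert (2 * Rabs x * Rabs y <= x * x + y * y)
    by (pose proof (Rle_0_sqr (Rabs x - Rabs y)); unfold Rsqr in *; nra).
  replace (exp x * sin y - y) with ((exp x - 1) * sin y + (sin y - y)) by ring.
  pose proof (Rabs_triang ((exp x - 1) * sin y) (sin y - y)).
  rewrite Rabs_mult in H10; lra.
Qed.

Lemma Cexp_taylor1 (v : CC) : Rabs (Re v) <= 1 / 2 -> Rabs (Im v) <= 1 / 2 ->
  Cabs (Csub (Csub (Cexp v) Defs.C1) v) <= 4 * Cnorm2 v.
Proof.
  intros Hx Hy.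
  replace (Csub (Csub (Cexp v) Defs.C1) v)
    with (exp (Re v) * cos (Im v) - 1 - Re v, exp (Re v) * sin (Im v) - Im v)
    by (apply CC_eq; unfold Csub, Cadd, Copp, Cexp, Defs.C1, Re, Im; simpl; ring).
  set (a := exp (Re v) * cos (Im v) - 1 - Re v); set (b := exp (Re v) * sin (Im v) - Im v).
  pose proof (exp_cos_remainder (Re v) (Im v) Hx Hy : Rabs a <= _).
  pose proof (exp_sin_remainder (Re v) (Im v) Hx Hy : Rabs b <= _).
  pose proof (Cabs_le_sum (a, b) : Cabs (a, b) <= Rabs a + Rabs b).
  unfold Cnorm2; lra.
Qed.

Lemma near_one (V : CC) (e : R) : 0 < e <= 1 / 4 -> Cabs (Csub V Defs.C1) <= e ->
  0 < Re V /\ Rabs (ln (Cabs V)) <= 4 * e /\ Rabs (Arg V) < 4 * e.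
Proof.
  intros He HV.
  replace (Csub V Defs.C1) with (Re V - 1, Im V) in HV
    by (apply CC_eq; unfold Csub, Cadd, Copp, Defs.C1, Re, Im; simpl; ring).
  assert (HRe : Rabs (Re V - 1) <= e)
    by (eapply Rle_trans; [apply (Re_le_Cabs (Re V - 1, Im V)) | exact HV]).
  assert (HIm : Rabs (Im V) <= e)
    by (eapply Rle_trans; [apply (Im_le_Cabs (Re V - 1, Im V)) | exact HV]).
  assert (HReV : 1 - e <= Re V) by (revert HRe; split_Rabs; intros; lra).
  assert (HV0 : V <> C0)
    by (intro E; rewrite E in HReV; unfold C0, Re in HReV; simpl in HReV; lra).
  assert (Hlow : 1 - e <= Cabs V)
    by (pose proof (Re_le_Cabs V); pose proof (Rle_abs (Re V)); lra).
  assert (Hup : Cabs V <= 1 + 2 * e)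
    by (pose proof (Cabs_le_sum V); revert HRe HIm; split_Rabs; intros; lra).
  split; [lra | split].
  - destruct (ln_bounds (Cabs V)) as [L1 L2]; [lra |].
    assert (/ Cabs V <= 1 + 2 * e).
    { assert (/ Cabs V * Cabs V = 1) by (field; lra).
      assert (0 < / Cabs V) by (apply Rinv_0_lt_compat; lra). nra. }
    apply Rabs_le; lra.
  - destruct (Arg_right V ltac:(lra)) as [HA1 HA2].
    destruct (Arg_polar V HV0) as [_ Hsin].
    apply small_angle; [lra | lra |].
    rewrite <- Hsin, Rabs_mult, (Rabs_pos_eq (Cabs V)) in HIm by lra.
    pose proof (Rabs_pos (sin (Arg V))); nra.
Qed.

Lemma one_minus_power (Q : CC) (p e : R) : 0 < p -> 0 < e <= 1 / 8 -> p * e <= 1 / 8 ->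
  Cabs (Csub Q Defs.C1) <= e ->
  Cabs (Csub (Csub Defs.C1 (cpowP Q p)) (Cmul (RtoC p) (Csub Defs.C1 Q)))
    <= 128 * p * (1 + p) * (e * e).
Proof.
  intros Hp He Hpe HQ.
  destruct (near_one Q e ltac:(lra) HQ) as [HReQ [Hl1 Hl2]].
  assert (HQ0 : Q <> C0)
    by (intro E; rewrite E in HReQ; unfold C0, Re in HReQ; simpl in HReQ; lra).
  set (L := Clog_princ Q).
  assert (HL : Cnorm2 L <= 32 * (e * e)).
  { unfold L, Clog_princ, Cnorm2, Re, Im; simpl.
    assert (Rabs (ln (Cabs Q)) * Rabs (ln (Cabs Q)) <= (4 * e) * (4 * e))
      by (apply Rmult_le_compat; auto using Rabs_pos; lra).
    assert (Rabs (Arg Q) * Rabs (Arg Q) <= (4 * e) * (4 * e))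
      by (apply Rmult_le_compat; auto using Rabs_pos; lra).
    rewrite <- !Rabs_mult, !Rabs_pos_eq in * by nra; lra. }
  assert (HrL : Rabs (Re L) <= 4 * e /\ Rabs (Im L) <= 4 * e)
    by (unfold L, Clog_princ, Re, Im; simpl; lra).
  set (pL := (p * Re L, p * Im L) : CC).
  assert (HpL : Rabs (Re pL) <= 1 / 2 /\ Rabs (Im pL) <= 1 / 2).
  { unfold pL, Re at 1 3, Im at 1 3; simpl.
    rewrite !Rabs_mult, (Rabs_pos_eq p) by lra; split; nra. }
  (* Q = exp L and Q^p = exp (p L): both exponentials are close to first order. *)
  assert (EQ : Q = Cexp L) by (symmetry; apply Cexp_Clog_princ, HQ0).
  assert (EQp : cpowP Q p = Cexp pL) by (unfold cpowP; rewrite Cmul_RtoC; reflexivity).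
  replace (Csub (Csub Defs.C1 (cpowP Q p)) (Cmul (RtoC p) (Csub Defs.C1 Q)))
    with (Csub (Cmul (RtoC p) (Csub (Csub (Cexp L) Defs.C1) L))
               (Csub (Csub (Cexp pL) Defs.C1) pL))
    by (rewrite EQp, EQ at 1; apply CC_eq;
        unfold pL, Csub, Cadd, Copp, Cmul, RtoC, Defs.C1, Re, Im; simpl; ring).
  pose proof (Cabs_sub (Cmul (RtoC p) (Csub (Csub (Cexp L) Defs.C1) L))
                       (Csub (Csub (Cexp pL) Defs.C1) pL)) as Htri.
  rewrite Cabs_mul, Cabs_RtoC in Htri by lra.
  pose proof (Cexp_taylor1 L ltac:(lra) ltac:(lra)) as T1.
  pose proof (Cexp_taylor1 pL (proj1 HpL) (proj2 HpL)) as T2.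
  change (Cnorm2 pL) with (Cnorm2 (p * Re L, p * Im L)) in T2; rewrite Cnorm2_scal in T2.
  assert (p * Cabs (Csub (Csub (Cexp L) Defs.C1) L) <= p * (4 * Cnorm2 L))
    by (apply Rmult_le_compat_l; lra).
  assert (p * Cnorm2 L <= p * (32 * (e * e))) by (apply Rmult_le_compat_l; lra).
  assert (p * p * Cnorm2 L <= p * p * (32 * (e * e)))
    by (apply Rmult_le_compat_l; nra).
  nra.
Qed.

(* Key estimate.  For a small T = t e^(mu + i phi), the quotient (1 - (1 - T)^p) / t is
   p e^(mu + i phi) times a factor close to 1, so its argument is phi up to an error c. *)
Lemma power_quotient (p c mu phi : R) (t : CC) :
  0 < p -> 0 < c <= 1 -> t <> C0 -> 512 * (1 + p) * (Cabs t * exp mu) <= c ->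
  let Q := Csub Defs.C1 (Cmul t (Cexp (mu, phi))) in
  0 < Re Q /\ Rabs (p * Arg Q) <= 1 / 2 /\
  exists lam psi, Rabs psi <= c /\
    Cdiv (Csub Defs.C1 (cpowP Q p)) t = Cexp (lam, phi + psi).
Proof.
  intros Hp Hc Ht Hsmall Q.
  set (P := Cexp (mu, phi)); set (e := Cabs t * exp mu).
  fold e in Hsmall.
  assert (He : 0 < e) by (pose proof (Cabs_pos t Ht); pose proof (exp_pos mu); unfold e; nra).
  assert (Hpe : 0 < p * e) by nra.
  assert (Hpe1 : p * e <= 1 / 512) by nra.
  assert (He1 : e <= 1 / 512) by nra.
  assert (HQ1 : Cabs (Csub Q Defs.C1) = e).
  { replace (Csub Q Defs.C1) with (Copp (Cmul t P))
      by (apply CC_eq; unfold Q, Csub, Cadd, Copp, Defs.C1, Re, Im; simpl; ring).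
    rewrite Cabs_Copp, Cabs_mul; unfold P; rewrite Cabs_Cexp; reflexivity. }
  destruct (near_one Q e ltac:(lra) ltac:(lra)) as [HReQ [_ HArgQ]].
  split; [exact HReQ | split].
  { rewrite Rabs_mult, (Rabs_pos_eq p) by lra; nra. }
  (* Factor the quotient as (p P) V with V close to 1. *)
  set (A := Csub Defs.C1 (cpowP Q p)); set (k := Cmul (RtoC p) P).
  assert (Hk : Cabs k = p * exp mu)
    by (unfold k, P; rewrite Cabs_mul, Cabs_RtoC, Cabs_Cexp by lra; reflexivity).
  assert (Hk0 : k <> C0) by (apply Cabs_ne0; rewrite Hk; pose proof (exp_pos mu); nra).
  set (B := Cmul k t).
  assert (HB : Cabs B = p * e) by (unfold B, e; rewrite Cabs_mul, Hk; ring).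
  assert (HB0 : B <> C0) by (apply Cabs_ne0; rewrite HB; nra).
  set (V := Cdiv A B).
  assert (HV1 : Cabs (Csub V Defs.C1) <= 128 * (1 + p) * e).
  { unfold V; rewrite Csub_div_one, Cabs_div, HB by exact HB0.
    pose proof (one_minus_power Q p e Hp ltac:(nra) ltac:(nra) ltac:(lra)) as H.
    replace (Cmul (RtoC p) (Csub Defs.C1 Q)) with B in H
      by (apply CC_eq; unfold B, k, Q, P, Cmul, Csub, Cadd, Copp, RtoC, Defs.C1, Re, Im;
          simpl; ring).
    apply (Rmult_le_reg_r (p * e)); [nra |].
    unfold Rdiv; rewrite Rmult_assoc, Rinv_l, Rmult_1_r by nra.
    replace (128 * (1 + p) * e * (p * e)) with (128 * p * (1 + p) * (e * e)) by ring.
    exact H. }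
  destruct (near_one V (128 * (1 + p) * e) ltac:(nra) HV1) as [HReV [_ HArgV]].
  assert (HV0 : V <> C0)
    by (intro E; rewrite E in HReV; unfold C0, Re in HReV; simpl in HReV; lra).
  exists (ln p + (mu + ln (Cabs V))), (Arg V); split; [lra |].
  rewrite (Cdiv_rescale A k t Hk0 Ht); fold B V.
  rewrite <- (Cexp_Clog_princ V HV0) at 1; unfold k, P.
  rewrite <- Cmul_assoc, Cexp_add, scal_Cexp by lra.
  reflexivity.
Qed.

(* Geometry of Gamma_{eta,M}: the map z |-> -1/z sends it into a small disc, inside
   the sector  eta |Re w| < Im w,  whose arguments stay away from 0 and PI. *)
Lemma sector_angle (w : CC) (eta : R) : 0 < eta -> eta * Rabs (Re w) < Im w ->
  eta / (1 + eta) < Arg w < PI - eta / (1 + eta).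
Proof.
  intros Heta Hw; pose proof (Rabs_pos (Re w)).
  assert (HIm : 0 < Im w) by nra.
  assert (Hw0 : w <> C0) by (intro E; rewrite E in HIm; unfold C0, Im in HIm; simpl in HIm; lra).
  set (beta := Arg w); destruct (Arg_polar w Hw0) as [Hc Hs]; fold beta in Hc, Hs.
  pose proof (Cabs_pos w Hw0).
  assert (Hsin : 0 < sin beta) by nra.
  assert (Hsec : eta * Rabs (cos beta) < sin beta).
  { rewrite <- Hc, Rabs_mult, Rabs_pos_eq in Hw by lra; rewrite <- Hs in Hw; nra. }
  assert (Hth : eta / (1 + eta) < sin beta).
  { pose proof (sin2_cos2 beta); unfold Rsqr in *; pose proof (SIN_bound beta).
    assert (Rabs (cos beta) * Rabs (cos beta) = cos beta * cos beta)
      by (rewrite <- Rabs_mult; apply Rabs_pos_eq; nra).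
    assert (Rabs (cos beta) <= 1) by (pose proof (COS_bound beta); apply Rabs_le; lra).
    pose proof (Rabs_pos (cos beta)).
    assert (1 - Rabs (cos beta) <= sin beta) by nra.
    apply (Rmult_lt_reg_r (1 + eta)); [lra |]; field_simplify; nra. }
  pose proof (Arg_range w) as Hr; fold beta in Hr.
  assert (Hb : 0 < beta < PI).
  { split.
    - destruct (Rtotal_order beta 0) as [h|[h|h]]; auto.
      + pose proof (sin_lt_0_var beta ltac:(lra) h); lra.
      + rewrite h, sin_0 in Hsin; lra.
    - destruct (Req_dec beta PI) as [h|h]; [rewrite h, sin_PI in Hsin; lra | lra]. }
  pose proof (sin_le_id beta ltac:(lra)).
  pose proof (sin_le_id (PI - beta) ltac:(lra)) as Hpi; rewrite sin_PI_x in Hpi.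
  lra.
Qed.

Lemma Gamma_w1 (eta M : R) (z : CC) : 0 < M -> Gamma eta M z ->
  z <> C0 /\ eta * Rabs (Re (G_w1 z)) < Im (G_w1 z) /\ Cabs (G_w1 z) < / M.
Proof.
  intros HM [HzM Hze].
  assert (Hz0 : z <> C0) by (intro E; rewrite E in HzM; unfold C0, Im in HzM; simpl in HzM; lra).
  pose proof (Cnorm2_pos z Hz0) as Hn.
  assert (HRe : Re (G_w1 z) = - (Re z / Cnorm2 z)) by reflexivity.
  assert (HIm : Im (G_w1 z) = Im z / Cnorm2 z)
    by (unfold G_w1, Copp, Cinv, Im; simpl; field; lra).
  split; [exact Hz0 | split].
  - rewrite HRe, HIm, Rabs_Ropp; unfold Rdiv; rewrite Rabs_mult.
    assert (0 < / Cnorm2 z) by (apply Rinv_0_lt_compat; lra).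
    rewrite (Rabs_pos_eq (/ Cnorm2 z)) by lra; nra.
  - unfold G_w1; rewrite Cabs_Copp, Cabs_inv by exact Hz0.
    pose proof (Im_le_Cabs z); pose proof (Rle_abs (Im z)).
    apply Rinv_lt_contravar; nra.
Qed.

Lemma G_w3_on_Gamma (alpha eta r : R) (t : CC) :
  0 < alpha -> 0 < eta -> 0 < r -> t <> C0 ->
  exists M, 0 < M /\ forall z, Gamma eta M z ->
    0 < Re (G_w2 alpha t z) /\ Rabs (1 / r * Arg (G_w2 alpha t z)) <= 1 / 2 /\
    exists lam th, 0 < th < alpha * PI /\ G_w3 alpha r t z = Cexp (lam, th).
Proof.
  intros Ha Heta Hr Ht; pose proof PI_RGT_0.
  set (th0 := eta / (1 + eta)).
  assert (Hth0 : 0 < th0) by (unfold th0; apply Rdiv_lt_0_compat; lra).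
  set (c := Rmin 1 (alpha * th0)).
  assert (Hc : 0 < c <= 1 /\ c <= alpha * th0).
  { unfold c; pose proof (Rmin_l 1 (alpha * th0)); pose proof (Rmin_r 1 (alpha * th0)).
    split; [split; [apply Rmin_pos; nra |] |]; lra. }
  set (p := 1 / r); assert (Hp : 0 < p) by (unfold p; apply Rdiv_lt_0_compat; lra).
  pose proof (Cabs_pos t Ht).
  set (d := c / (512 * (1 + p) * (1 + Cabs t))).
  assert (Hd : 0 < d) by (unfold d; apply Rdiv_lt_0_compat; nra).
  assert (Hdc : 512 * (1 + p) * (Cabs t * d) <= c).
  { unfold d; apply (Rmult_le_reg_r (1 + Cabs t)); [lra |].
    replace (512 * (1 + p) * (Cabs t * (c / (512 * (1 + p) * (1 + Cabs t)))) * (1 + Cabs t))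
      with (c * Cabs t) by (field; nra).
    nra. }
  assert (HR : 0 < Rpower d (1 / alpha)) by (unfold Rpower; apply exp_pos).
  exists (/ Rpower d (1 / alpha)); split; [apply Rinv_0_lt_compat, HR |].
  intros z Hz.
  destruct (Gamma_w1 eta _ z ltac:(apply Rinv_0_lt_compat, HR) Hz) as [_ [Hsec Hw]].
  rewrite Rinv_inv in Hw; set (w := G_w1 z) in *.
  pose proof (sector_angle w eta Heta Hsec) as Hbeta; fold th0 in Hbeta.
  assert (Hw0 : 0 < Cabs w).
  { apply Cabs_pos; intro E; rewrite E in Hsec; unfold C0, Re, Im in Hsec; simpl in Hsec.
    rewrite Rabs_R0 in Hsec; lra. }
  set (mu := alpha * ln (Cabs w)).
  assert (Hpow : cpow1 w alpha = Cexp (mu, alpha * Arg w)).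
  { unfold cpow1, Clog1, arg1; destruct (Rlt_dec 0 (Arg w)); [| lra].
    rewrite Cmul_RtoC; reflexivity. }
  assert (Hmu : exp mu < d).
  { change (exp mu) with (Rpower (Cabs w) alpha).
    replace d with (Rpower (Rpower d (1 / alpha)) alpha).
    - apply Rlt_Rpower_l; lra.
    - rewrite Rpower_mult; replace (1 / alpha * alpha) with 1 by (field; lra).
      apply Rpower_1, Hd. }
  assert (Hsmall : 512 * (1 + p) * (Cabs t * exp mu) <= c).
  { assert (Cabs t * exp mu <= Cabs t * d) by (apply Rmult_le_compat_l; lra).
    assert (512 * (1 + p) * (Cabs t * exp mu) <= 512 * (1 + p) * (Cabs t * d))
      by (apply Rmult_le_compat_l; lra).
    lra. }
  destruct (power_quotient p c mu (alpha * Arg w) t Hp (proj1 Hc) Ht Hsmall)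
    as [HReQ [HArgQ [lam [psi [Hpsi HX]]]]].
  assert (HQ : G_w2 alpha t z = Csub Defs.C1 (Cmul t (Cexp (mu, alpha * Arg w))))
    by (unfold G_w2; fold w; rewrite Hpow; reflexivity).
  rewrite HQ; split; [exact HReQ | split; [exact HArgQ |]].
  exists lam, (alpha * Arg w + psi); split.
  - pose proof (Rabs_pos psi); revert Hpsi; split_Rabs; intros; nra.
  - unfold G_w3; rewrite HQ; exact HX.
Qed.

Lemma G_of_w3_exp (alpha r : R) (s z : CC) (lam th : R) :
  0 < r -> 0 < th < 2 * PI -> G_w3 alpha r s z = Cexp (lam, th) ->
  G alpha s r z = Copp (Cexp (1 / alpha * (ln r + lam), 1 / alpha * th)).
Proof.
  intros Hr Hth HX; unfold G; rewrite HX, cpow1_Cexp by exact Hth.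
  rewrite scal_Cexp by (unfold Rpower; apply exp_pos).
  unfold Re, Im; simpl; rewrite ln_Rpower; do 3 f_equal; ring.
Qed.

Lemma F_welldef_of_exp (alpha r : R) (s z : CC) (lam th : R) :
  0 < r -> z <> C0 -> not_in_nonneg_axis (G_w1 z) -> not_in_nonpos_axis (G_w2 alpha s z) ->
  0 < th < 2 * PI -> G_w3 alpha r s z = Cexp (lam, th) -> F_welldef alpha s r z.
Proof.
  intros Hr Hz H1 H2 Hth HX; unfold F_welldef.
  repeat split; auto.
  - rewrite HX; apply Cexp_not_nonneg, Hth.
  - rewrite (G_of_w3_exp alpha r s z lam th Hr Hth HX); apply Copp_Cexp_ne0.
Qed.

Lemma G_w1_F (alpha r : R) (s z v : CC) :
  G alpha s r z = Copp (Cexp v) -> G_w1 (F alpha s r z) = Cexp v.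
Proof.
  intros HG; unfold F, G_w1; rewrite HG, Cinv_Cinv by apply Copp_Cexp_ne0.
  apply Copp_Copp.
Qed.

Lemma Csub_C1_twice (Y : CC) : Csub Defs.C1 (Csub Defs.C1 Y) = Y.
Proof. apply CC_eq; unfold Csub, Cadd, Copp, Defs.C1, Re, Im; simpl; ring. Qed.

Lemma F_compose (alpha r u : R) (s z : CC) (lam1 th1 lam2 th2 : R) :
  0 < alpha -> alpha <= 2 -> 0 < r -> 0 < u -> s <> C0 ->
  Rabs (1 / u * Arg (G_w2 alpha (Cmul (RtoC u) s) z)) <= 1 / 2 ->
  0 < th1 < alpha * PI -> G_w3 alpha u (Cmul (RtoC u) s) z = Cexp (lam1, th1) ->
  0 < th2 < alpha * PI -> G_w3 alpha (u * r) (Cmul (RtoC u) s) z = Cexp (lam2, th2) ->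
  F_welldef alpha s r (F alpha (Cmul (RtoC u) s) u z) /\
  F alpha s r (F alpha (Cmul (RtoC u) s) u z) = F alpha (Cmul (RtoC u) s) (u * r) z.
Proof.
  intros Ha Ha2 Hr Hu Hs HArg Hth1 HX1 Hth2 HX2; pose proof PI2_1.
  set (t := Cmul (RtoC u) s) in *; set (Q := G_w2 alpha t z) in *.
  assert (Hu0 : RtoC u <> C0) by (apply Cabs_ne0; rewrite Cabs_RtoC; lra).
  assert (Ht : t <> C0) by (apply Cscal_ne0; assumption).
  assert (Hth1' : 0 < th1 < 2 * PI) by nra.
  assert (Hth2' : 0 < th2 < 2 * PI) by nra.
  assert (Hv1 : 0 < 1 / alpha * th1 < 2 * PI).
  { split; [apply Rmult_lt_0_compat; [apply Rdiv_lt_0_compat |]; lra |].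
    apply (Rmult_lt_reg_l alpha); [lra |]; field_simplify; nra. }
  pose proof (G_of_w3_exp alpha u t z lam1 th1 Hu Hth1' HX1) as HG1.
  set (F1 := F alpha t u z).
  assert (HW1 := G_w1_F alpha u t z _ HG1); fold F1 in HW1.
  (* First step: -1/F1 raised to alpha gives back u G_w3, so G_w2 at F1 is Q^(1/u). *)
  assert (HW2 : G_w2 alpha s F1 = cpowP Q (1 / u)).
  { unfold G_w2 at 1; rewrite HW1, cpow1_Cexp by exact Hv1; unfold Re, Im; simpl.
    replace (alpha * (1 / alpha * (ln u + lam1))) with (ln u + lam1) by (field; lra).
    replace (alpha * (1 / alpha * th1)) with th1 by (field; lra).
    replace (ln u + lam1, th1) with (ln u + Re (lam1, th1), Im (lam1, th1)) by reflexivity.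
    rewrite <- scal_Cexp, <- HX1 by exact Hu; unfold G_w3; fold Q.
    unfold t; rewrite <- Cdiv_rescale, Cmul_div by assumption.
    apply Csub_C1_twice. }
  (* Second step: (Q^(1/u))^(1/r) = Q^(1/(ur)), so G_w3 at F1 is u times G_w3 for (us,ur). *)
  assert (HW3 : G_w3 alpha r s F1 = Cexp (ln u + lam2, th2)).
  { unfold G_w3 at 1; rewrite HW2, cpowP_cpowP by (revert HArg; split_Rabs; intros; lra).
    replace (1 / r * (1 / u)) with (1 / (u * r)) by (field; lra).
    rewrite (Cdiv_rescale _ (RtoC u) s Hu0 Hs); fold t Q.
    change (Cdiv (Csub Defs.C1 (cpowP Q (1 / (u * r)))) t) with (G_w3 alpha (u * r) t z).
    rewrite HX2, scal_Cexp by exact Hu; reflexivity. }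
  pose proof (G_of_w3_exp alpha r s F1 _ _ Hr Hth2' HW3) as HG2.
  pose proof (G_of_w3_exp alpha (u * r) t z lam2 th2 ltac:(nra) Hth2' HX2) as HG3.
  split.
  - apply (F_welldef_of_exp alpha r s F1 (ln u + lam2) th2); auto.
    + apply Cinv_ne0; rewrite HG1; apply Copp_Cexp_ne0.
    + rewrite HW1; apply Cexp_not_nonneg, Hv1.
    + rewrite HW2; unfold cpowP; rewrite Cmul_RtoC; apply Cexp_not_nonpos, HArg.
  - unfold F at 1 2; rewrite HG2, HG3, ln_mult by lra.
    do 4 f_equal; ring.
Qed.

Theorem theorem3p1 (r u alpha eta : R) (s : CC) :
  0 < r -> 0 < u -> 0 < alpha -> alpha <= 2 -> 0 < eta -> s <> C0 ->
  exists M : R, 0 < M /\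
    forall z : CC, Gamma eta M z ->
      F_welldef alpha (Cmul (RtoC u) s) u z /\
      F_welldef alpha s r (F alpha (Cmul (RtoC u) s) u z) /\
      F_welldef alpha (Cmul (RtoC u) s) (u * r) z /\
      F alpha s r (F alpha (Cmul (RtoC u) s) u z) = F alpha (Cmul (RtoC u) s) (u * r) z.
Proof.
  intros Hr Hu Ha Ha2 Heta Hs; pose proof PI_RGT_0.
  set (t := Cmul (RtoC u) s); assert (Ht : t <> C0) by (apply Cscal_ne0; assumption).
  destruct (G_w3_on_Gamma alpha eta u t Ha Heta Hu Ht) as [M1 [HM1 H1]].
  destruct (G_w3_on_Gamma alpha eta (u * r) t Ha Heta ltac:(nra) Ht) as [M2 [HM2 H2]].
  pose proof (Rmax_l M1 M2); pose proof (Rmax_r M1 M2).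
  exists (Rmax M1 M2); split; [lra |]; intros z [HzM Hze].
  assert (Hz1 : Gamma eta M1 z) by (split; lra).
  assert (Hz2 : Gamma eta M2 z) by (split; lra).
  destruct (Gamma_w1 eta M1 z HM1 Hz1) as [Hz0 [Hsec _]].
  assert (Hcut1 : not_in_nonneg_axis (G_w1 z))
    by (intros [Him _]; pose proof (Rabs_pos (Re (G_w1 z))); nra).
  destruct (H1 z Hz1) as [HReQ [HArg [lam1 [th1 [Hth1 HX1]]]]].
  destruct (H2 z Hz2) as [_ [_ [lam2 [th2 [Hth2 HX2]]]]].
  assert (Hcut2 : not_in_nonpos_axis (G_w2 alpha t z)) by (intros [_ Hre]; lra).
  destruct (F_compose alpha r u s z lam1 th1 lam2 th2 Ha Ha2 Hr Hu Hs HArg Hth1 HX1 Hth2 HX2)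
    as [Hwd Hcomp].
  split; [| split; [exact Hwd | split; [| exact Hcomp]]].
  - apply (F_welldef_of_exp alpha u t z lam1 th1); auto; nra.
  - apply (F_welldef_of_exp alpha (u * r) t z lam2 th2); auto; nra.
Qed.
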